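(* For an integer $d\ge1$, let $a^+(n;d)$ (resp. $a^-(n;d)$) denote the number of partitions of $n$ whose Frobenius symbol has exactly $d$ columns and whose last parity block is positive (resp. negative). Then, as formal power series in $q$, \[ \sum_{n=1}^{\infty} a^+(n;d) q^n = \frac{q^{d^2+d}}{(q;q)_d^2 \, (1+q^d)} \qquad\text{and}\qquad \sum_{n=1}^{\infty} a^-(n;d) q^n = \frac{q^{d^2}}{(q;q)_d^2 \,(1+q^d)}. \]
   Context: Every partition $\lambda$ of $n$ is represented by its Frobenius symbol $\begin{pmatrix} x_1 & \cdots & x_d\\ y_1&\cdots & y_d\end{pmatrix}$, where $d$ is the number of cells on the main diagonal of the Ferrers diagram, $x_i$ (resp. $y_i$) is the number of cells in row $i$ to the right of (resp. in column $i$ below) the diagonal, so $x_1>\cdots>x_d\ge 0$, $y_1>\cdots>y_d\ge0$ and $\sum_{i=1}^d(x_i+y_i+1)=n$; $d$ is called the number of columns. Column $i$ is positive if $x_i-y_i\ge 1$ and negative if $x_i-y_i\le 0$. The parity blocks of $\lambda$ are the maximal sets of contiguous columns all having the same sign; a block is positive (resp. negative) if its columns are positive (resp. negative). Notation: $(a;q)_n=(1-a)(1-aq)\cdots(1-aq^{n-1})$. *)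

From mathcomp Require Import all_boot all_order all_algebra.
Set Implicit Arguments. Unset Strict Implicit. Unset Printing Implicit Defensive.
Import GRing.Theory.

(* A partition of n is encoded as its sequence of parts in nonincreasing
   order, padded with zeros to length n (every part is <= n, and there are at
   most n nonzero parts). *)
Definition partn (n : nat) :=
  {t : n.-tuple 'I_n.+1 |
     sorted geq (map val t) && (\sum_(i <- t) val i == n)%N}.

Section Frob.
Variable n : nat.
Implicit Type l : partn n.

Definition parts l : seq nat := map val (val (sval l)).
(* lambda_{i+1} (0-indexed) *)
Definition lam l (i : nat) : nat := nth 0 (parts l) i.
(* conjugate: lambda'_{j+1} = number of parts >= j+1 *)
Definition conjp l (j : nat) : nat := count (fun p => j < p) (parts l).
(* number of columns d of the Frobenius symbol = number of cells on the
   main diagonal (side of the Durfee square) *)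
Definition ncols l : nat := count (fun i => i < lam l i) (iota 0 n).
(* Frobenius entries, 0-indexed: x i = x_{i+1}, y i = y_{i+1} *)
Definition frx l (i : nat) : nat := lam l i - i.+1.
Definition fry l (i : nat) : nat := conjp l i - i.+1.
Definition colpos l (i : nat) : bool := fry l i < frx l i.
Definition colneg l (i : nat) : bool := frx l i <= fry l i.
(* The last parity block: the maximal set of contiguous columns ending at the
   last column d, all having the same sign as column d. *)
Definition last_block l : seq nat :=
  [seq j <- iota 0 (ncols l) |
     all (fun k => colpos l k == colpos l (ncols l).-1)
         (iota j (ncols l - j))].
Definition last_block_pos l : bool :=
  (last_block l != [::]) && all (colpos l) (last_block l).
Definition last_block_neg l : bool :=
  (last_block l != [::]) && all (colneg l) (last_block l).
End Frob.

Definition apos (n d : nat) : nat :=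
  #|[pred l : partn n | (ncols l == d) && last_block_pos l]|.
Definition aneg (n d : nat) : nat :=
  #|[pred l : partn n | (ncols l == d) && last_block_neg l]|.

Local Open Scope ring_scope.
Definition qpoch (d : nat) : {poly int} := \prod_(i < d) (1 - 'X^(i.+1)).
Definition gen_trunc (a : nat -> nat) (N : nat) : {poly int} :=
  \sum_(1 <= k < N) (a k)%:R *: 'X^k.

(* A partition with Durfee square of side d is the d x d square, a partition to its right
   with at most d parts and a partition below it with parts at most d.  Code the first by
   the gaps lambda_i - lambda_(i+1) (1 <= i < d) and by x_d = lambda_d - d, and the second
   by the multiplicities of 1, ..., d - 1 and by y_d, the multiplicity of d.  The last
   parity block contains column d, so it is positive iff y_d < x_d.  Writing (x_d, y_d) as
   (s + 1 + t, s) or (s, s + t) makes the size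
     n = d^2 + sum_i i (gap_i + mult_i) + d (x_d + y_d),   x_d + y_d = 2 s + t (+ 1),
   a sum of independent terms, so the generating function is
     q^(d^2 (+ d)) / ((q;q)_(d-1)^2 (1 - q^(2d)) (1 - q^d)),
   and (q;q)_d^2 (1 + q^d) = (q;q)_(d-1)^2 (1 - q^(2d)) (1 - q^d).  Modulo q^N it suffices
   to let every entry of the code range over [0, N). *)

From Pilot Require Import Defs.
From mathcomp Require Import all_boot all_order all_algebra.
From mathcomp Require Import zify ring.
(* Re-import Defs so that [partn] is the type of partitions, not prime.partn. *)
Import Defs.
Set Implicit Arguments. Unset Strict Implicit. Unset Printing Implicit Defensive.
Import GRing.Theory.

Lemma leq_sumn_mem (s : seq nat) x : x \in s -> x <= sumn s.
Proof. by elim: s => //= y s IH; rewrite in_cons => /orP [/eqP -> | /IH]; lia. Qed.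

Lemma sorted_geq_nth (s : seq nat) i j :
  sorted geq s -> i <= j -> nth 0 s j <= nth 0 s i.
Proof.
move=> s_sorted le_ij; have [lt_js|] := ltnP j (size s); last first.
  by move=> ?; rewrite nth_default.
apply: (@sorted_leq_nth _ geq) => //.
- by move=> a b c /=; lia.
- by move=> a /=.
- by rewrite inE; lia.
Qed.

Lemma sorted_geq_cat (s1 s2 : seq nat) : sorted geq s1 -> sorted geq s2 ->
  {in s1 & s2, forall x y, y <= x} -> sorted geq (s1 ++ s2).
Proof.
case: s1 => [|x s1] //= s1_sorted; rewrite cat_path s1_sorted /=.
case: s2 => [|y s2] //= -> ge12; rewrite andbT ge12 ?mem_head //.
exact: mem_last.
Qed.

Lemma sorted_geq_eq (s1 s2 : seq nat) : sorted geq s1 -> sorted geq s2 ->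
  (forall u, count_mem u s1 = count_mem u s2) -> s1 = s2.
Proof.
move=> sorted1 sorted2 count12; apply: (sorted_eq _ _ sorted1 sorted2).
- by move=> a b c /=; lia.
- by move=> a b /= /andP [? ?]; lia.
- by apply/allP => u _; apply/eqP; exact: count12.
Qed.

Lemma count_iota_downclosed (P : pred nat) n d :
  (forall i, P i.+1 -> P i) -> count P (iota 0 n) = d ->
  d <= n /\ {in gtn n, forall i, P i = (i < d)}.
Proof.
move=> P_down count_d.
have le_dn : d <= n by rewrite -count_d -[n in _ <= n](size_iota 0) count_size.
have P_le i j : i <= j -> P j -> P i.
  by move=> /subnK <-; elim: (j - i) => // m IH /P_down.
have countE m : m <= n -> d = count P (iota 0 m) + count P (iota m (n - m)).
  by move=> le_mn; rewrite -count_cat -iotaD subnKC.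
split=> // i /[!inE] lt_in; apply/idP/idP => [Pi | lt_id].
- have := countE i.+1 lt_in; have -> : count P (iota 0 i.+1) = i.+1.
    rewrite -[RHS](size_iota 0) -count_predT; apply/eq_in_count => j /[!mem_iota] ?.
    by apply/(P_le _ i) => //; lia.
  lia.
- apply/negPn/negP => nPi.
  have := countE i (ltnW lt_in); have -> : count P (iota i (n - i)) = 0.
    apply/eqP; rewrite -leqn0 leqNgt -has_count; apply/hasPn => j /[!mem_iota].
    by case/andP => le_ij _; apply: contraNN nPi; apply: P_le.
  have := count_size P (iota 0 i); rewrite size_iota; lia.
Qed.

Lemma count_iota_prefix (P : pred nat) n d : d <= n ->
  {in gtn n, forall i, P i = (i < d)} -> count P (iota 0 n) = d.
Proof.
move=> le_dn P_E; rewrite -size_filter (@eq_in_filter _ _ (fun i => i < 0 + d)).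
  by rewrite filter_iota_ltn ?size_iota.
by move=> i /[!mem_iota] /andP [_ lt_in]; apply: P_E.
Qed.

Lemma sum_mul_count (s : seq nat) D (phi : nat -> nat) : all (gtn D) s ->
  \sum_(v < D) phi v * count_mem (v : nat) s = sumn (map phi s).
Proof.
elim: s => [|x s IH] /=; first by rewrite big1 // => v _; rewrite muln0.
case/andP => lt_xD /IH <-; under eq_bigr do rewrite mulnDr.
rewrite big_split /=; congr (_ + _).
rewrite (bigD1 (Ordinal lt_xD)) //= eqxx muln1 big1 ?addn0 // => v.
by rewrite -val_eqE /= eq_sym => /negbTE ->; rewrite muln0.
Qed.

Definition mult_seq (m : nat -> nat) (D : nat) : seq nat :=
  flatten [seq nseq (m v) v | v <- iota 0 D].

Lemma mult_seqS m D : mult_seq m D.+1 = mult_seq m D ++ nseq (m D) D.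
Proof. by rewrite /mult_seq -addn1 iotaD map_cat flatten_cat /= cats0. Qed.

Lemma count_mult_seq m D u : count_mem u (mult_seq m D) = if u < D then m u else 0.
Proof.
elim: D => // D IH; rewrite mult_seqS count_cat IH count_nseq /= ltnS.
by case: (ltngtP u D) => [||->]; rewrite ?eqxx; lia.
Qed.

Lemma mem_mult_seq m D x : x \in mult_seq m D -> x < D.
Proof. by rewrite -has_pred1 has_count count_mult_seq; case: ifP. Qed.

Lemma sumn_mult_seq (phi : nat -> nat) m D :
  sumn (map phi (mult_seq m D)) = \sum_(v < D) phi v * m v.
Proof.
rewrite -(@sum_mul_count _ D); last by apply/allP => x /mem_mult_seq.
by apply: eq_bigr => v _; rewrite count_mult_seq ltn_ord.
Qed.

Lemma size_mult_seq m D : size (mult_seq m D) = \sum_(v < D) m v.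
Proof.
elim: D => [|D IH]; first by rewrite big_ord0.
by rewrite mult_seqS size_cat IH size_nseq big_ord_recr.
Qed.

Lemma sum_suffix_sums (F : nat -> nat) K :
  \sum_(i < K.+1) \sum_(i <= t < K) F t = \sum_(t < K) t.+1 * F t.
Proof.
elim: K => [|K IH]; first by rewrite big_ord1 big_geq // big_ord0.
rewrite big_ord_recr /= big_geq // addn0.
rewrite (eq_bigr (fun i : 'I_K.+1 => \sum_(i <= t < K) F t + F K)); last first.
  by move=> i _; rewrite big_nat_recr //=; exact: ltnSE (ltn_ord i).
by rewrite big_split /= IH sum_nat_const card_ord big_ord_recr /= mulnC.
Qed.

Lemma telescope_nonincr (g : nat -> nat) i K : (forall t, g t.+1 <= g t) -> i <= K ->
  g i = g K + \sum_(i <= t < K) (g t - g t.+1).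
Proof.
move=> g_nonincr; elim: K => [|K IH] le_iK.
  by move: le_iK; rewrite leqn0 => /eqP ->; rewrite big_geq ?addn0.
case: (ltngtP i K.+1) le_iK => [lt_iK _|//|-> _]; last by rewrite big_geq // addn0.
rewrite big_nat_recr //= IH //; have := g_nonincr K; lia.
Qed.

Section Partition.
Variable n : nat.
Implicit Types (l : partn n) (d : nat).

Lemma partsP l : [/\ size (parts l) = n, sorted geq (parts l) & sumn (parts l) = n].
Proof.
case: l => t t_part; case/andP: (t_part) => t_sorted /eqP t_sum; rewrite /parts /=.
by split; rewrite ?size_map ?size_tuple ?sumnE ?big_map.
Qed.

Lemma parts_inj : injective (@parts n).
Proof. by move=> l1 l2 /(inj_map val_inj) /val_inj /val_inj. Qed.

Lemma leq_lam l i j : i <= j -> lam l j <= lam l i.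
Proof. by case: (partsP l) => _ parts_sorted _; apply: sorted_geq_nth. Qed.

Lemma lam_leqn l i : lam l i <= n.
Proof.
case: (partsP l) => parts_size _ parts_sum; rewrite /lam.
have [lt_i|le_i] := ltnP i (size (parts l)); last by rewrite nth_default.
by rewrite -[X in _ <= X]parts_sum leq_sumn_mem ?mem_nth.
Qed.

Lemma ncolsP l d : ncols l = d -> d <= n /\ {in gtn n, forall i, (i < lam l i) = (i < d)}.
Proof.
by apply: count_iota_downclosed => i /=; have := leq_lam l (leqnSn i); lia.
Qed.

Lemma ncols_lam_geq l d i : ncols l = d -> i < d -> d <= lam l i.
Proof.
case/ncolsP => le_dn lamE lt_id; have := lamE d.-1; rewrite inE ltn_predL.
have := leq_lam l (_ : i <= d.-1); lia.
Qed.

Lemma ncols_lam_leq l d i : ncols l = d -> d <= i -> lam l i <= d.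
Proof.
case/ncolsP => le_dn lamE le_di; have [lt_dn|le_nd] := ltnP d n.
  by have := lamE d lt_dn; have := leq_lam l le_di; rewrite ltnn; lia.
by rewrite /lam nth_default //; case: (partsP l) => -> _ _; lia.
Qed.

Lemma ncols_tail_leq l d x : ncols l = d -> x \in drop d (parts l) -> x <= d.
Proof.
move=> ncols_d /(nthP 0) [j _ <-]; rewrite nth_drop.
exact: ncols_lam_leq ncols_d (leq_addr _ _).
Qed.

Lemma take_parts l d : d <= n -> take d (parts l) = [seq lam l i | i <- iota 0 d].
Proof.
case: (partsP l) => parts_size _ _ le_dn.
apply: (@eq_from_nth _ 0); first by rewrite size_takel ?parts_size // size_map size_iota.
move=> i; rewrite size_takel ?parts_size // => lt_id.
by rewrite nth_take // (nth_map 0) ?size_iota // nth_iota.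
Qed.

Variable k : nat.
Local Notation d := k.+1.

(* Below the Durfee square all parts are at most d, so y_d counts the parts equal to d. *)
Lemma colpos_lastE l : ncols l = d ->
  colpos l k = (count_mem d (drop d (parts l)) < lam l k - d).
Proof.
move=> ncols_d; have [le_dn _] := ncolsP ncols_d.
rewrite /colpos /frx /fry; congr (_ < _).
rewrite /conjp -{1}(cat_take_drop d (parts l)) count_cat take_parts // count_map.
rewrite (@count_iota_prefix _ d d) // => [|i /[!inE] lt_id /=]; last first.
  by have := ncols_lam_geq ncols_d lt_id; lia.
rewrite addKn; apply: eq_in_count => x /(ncols_tail_leq ncols_d) /=; lia.
Qed.

Lemma last_blockP l : ncols l = d ->
  k \in last_block l /\ {in last_block l, forall j, colpos l j = colpos l k}.
Proof.
move=> ncols_d; rewrite /last_block ncols_d; split=> [|j]; rewrite mem_filter mem_iota.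
  by rewrite subSnn /= eqxx ltnSn.
move=> /andP [/allP same_sign /andP [_ lt_jd]].
have j_in : j \in iota j (d - j) by rewrite mem_iota; lia.
exact: (eqP (same_sign j j_in)).
Qed.

Lemma last_block_posE l : ncols l = d -> last_block_pos l = colpos l k.
Proof.
case/last_blockP => k_last same_sign; rewrite /last_block_pos.
have -> : (last_block l != [::]) by case: (last_block l) k_last.
apply/allP/idP => [|pos_k j /same_sign ->] //; exact.
Qed.

Lemma last_block_negE l : ncols l = d -> last_block_neg l = ~~ colpos l k.
Proof.
case/last_blockP => k_last same_sign; rewrite /last_block_neg.
have -> : (last_block l != [::]) by case: (last_block l) k_last.
have colnegE j : colneg l j = ~~ colpos l j by rewrite /colneg /colpos -leqNgt.
apply/allP/idP => [|neg_k j /same_sign]; first by move/(_ k k_last); rewrite colnegE.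
by rewrite colnegE => ->.
Qed.

End Partition.

Section Truncation.
Variable R : comNzRingType.
Implicit Types p q : {poly R}.

Lemma take_polyMl m p q : take_poly m (take_poly m p * q) = take_poly m (p * q).
Proof.
by rewrite -[in RHS](poly_take_drop m p) mulrDl take_polyD mulrAC take_polyMXn_0 addr0.
Qed.

Lemma take_polyM_1subXn m e p : 0 < e -> take_poly m (p * (1 - 'X^(e * m))) = take_poly m p.
Proof.
move=> e_gt0; rewrite mulrBr mulr1 linearB /= -(prednK e_gt0) mulSn addnC exprD mulrA.
by rewrite take_polyMXn_0 subr0.
Qed.

Lemma take_polyM_prod_1subXn m (I : finType) (e : I -> nat) p :
  (forall i, 0 < e i) -> take_poly m (p * \prod_i (1 - 'X^(e i * m))) = take_poly m p.
Proof.
move=> e_gt0; elim/big_rec: _ => [|i q _ IH]; first by rewrite mulr1.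
by rewrite mulrA -take_polyMl take_polyM_1subXn // take_polyMl IH.
Qed.

End Truncation.

Local Open Scope ring_scope.

Lemma sum_pair_mul (R : pzSemiRingType) (A B : finType) (F : A -> R) (G : B -> R) :
  \sum_(p : A * B) F p.1 * G p.2 = (\sum_a F a) * (\sum_b G b).
Proof. by rewrite -(pair_bigA _ (fun a b => F a * G b)) big_distrlr. Qed.

Lemma take_gen_trunc (T : finType) (w : T -> nat) (a : nat -> nat) N :
  (forall t, (0 < w t)%N) -> (forall i, (0 < i < N)%N -> a i = #|[pred t | w t == i]|) ->
  take_poly N (gen_trunc a N) = take_poly N (\sum_t 'X^(w t)).
Proof.
move=> w_gt0 aE; apply/polyP => i; rewrite !coef_take_poly; case: ltnP => // lt_iN.
rewrite /gen_trunc !coef_sum; under eq_bigr do rewrite coefZ coefXn.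
under [RHS]eq_bigr do rewrite coefXn.
have [->|i_gt0] := posnP i.
  rewrite [RHS]big1 => [|t _]; last by rewrite eq_sym eqn0Ngt w_gt0.
  rewrite big_nat_cond big1 // => j /andP [/andP [j_gt0 _] _].
  by rewrite eq_sym eqn0Ngt j_gt0 mulr0.
rewrite (bigD1_seq i) ?mem_index_iota ?i_gt0 ?iota_uniq //= eqxx mulr1 big1 ?addr0.
  rewrite aE ?i_gt0 // -natr_sum -sum1_card big_mkcond /=; congr _%:R.
  by apply: eq_bigr => t _; rewrite inE eq_sym; case: eqP.
by move=> j /negbTE; rewrite eq_sym => ->; rewrite mulr0.
Qed.
Local Close Scope ring_scope.

Definition ffun0 m N (f : {ffun 'I_m -> 'I_N}) (i : nat) : nat :=
  if insub i is Some j then nat_of_ord (f j) else 0.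

Lemma ffun0E m N (f : {ffun 'I_m -> 'I_N}) (i : 'I_m) : ffun0 f i = f i.
Proof. by rewrite /ffun0 valK. Qed.

(* For d = k + 1, a code c stores gap_(i+1) in c.1.1 i, the multiplicity of i + 1 below the
   Durfee square in c.1.2 i, and the pair (s, t) in c.2; pos is the sign of column d. *)
Section Code.
Variables (k M : nat) (pos : bool).
Local Notation d := k.+1.
Local Notation N := M.+1.

Definition code := (({ffun 'I_k -> 'I_N} * {ffun 'I_k -> 'I_N}) * ('I_N * 'I_N))%type.
Implicit Type c : code.

Definition code_x c : nat := if pos then c.2.1 + 1 + c.2.2 else c.2.1.
Definition code_y c : nat := if pos then c.2.1 : nat else c.2.1 + c.2.2.

Definition weight c : nat := d * d + \sum_(i < k) i.+1 * c.1.1 i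
  + \sum_(i < k) i.+1 * c.1.2 i + d * (code_x c + code_y c).

Lemma weight_gt0 c : 0 < weight c.
Proof. by rewrite /weight -!addnA addn_gt0 muln_gt0. Qed.

Definition code_row c i : nat := d + code_x c + \sum_(i <= t < k) ffun0 c.1.1 t.

(* the multiplicity of v, for 0 < v <= d, below the Durfee square *)
Definition code_mult c v : nat := if v == d then code_y c else ffun0 c.1.2 v.-1.

Lemma code_row_nonincr c : {homo code_row c : i j / i <= j >-> j <= i}.
Proof.
apply: (@homo_leq _ _ (fun a b => b <= a)) => [//|y x z|i] /=; first lia.
rewrite /code_row leq_add2l; have [lt_ik|le_ki] := ltnP i k.
  by rewrite [X in _ <= X]big_ltn // leq_addl.
by rewrite !big_geq //; lia.
Qed.

Lemma code_row_geq c i : d <= code_row c i.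
Proof. by rewrite /code_row -addnA leq_addr. Qed.

Lemma code_row_last c : code_row c k = d + code_x c.
Proof. by rewrite /code_row big_geq ?addn0. Qed.

Lemma sum_code_rows c :
  \sum_(i < d) code_row c i = d * (d + code_x c) + \sum_(i < k) i.+1 * c.1.1 i.
Proof.
rewrite big_split sum_nat_const card_ord sum_suffix_sums /=; congr (_ + _).
by apply: eq_bigr => i _; rewrite ffun0E.
Qed.

Lemma sum_code_mult c :
  \sum_(v < d) v.+1 * code_mult c v.+1 = \sum_(i < k) i.+1 * c.1.2 i + d * code_y c.
Proof.
rewrite big_ord_recr /= /code_mult eqxx; congr (_ + _).
by apply: eq_bigr => i _; rewrite eqSS ltn_eqF // ffun0E.
Qed.

Section Partitions.
Variable n : nat.
Hypothesis le_nM : n <= M.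

(* the multiplicity of 0 pads the partition to n parts *)
Definition code_mult0 c v : nat :=
  if v == 0 then n - d - \sum_(u < d) code_mult c u.+1 else code_mult c v.

Definition code_parts c : seq nat :=
  [seq code_row c i | i <- iota 0 d] ++ sort geq (mult_seq (code_mult0 c) d.+1).

Definition encode (l : partn n) : code :=
  let tail := drop d (parts l) in
  let x := lam l k - d in
  let y := count_mem d tail in
  (([ffun i : 'I_k => inord (lam l i - lam l i.+1)],
    [ffun i : 'I_k => inord (count_mem i.+1 tail)]),
   (inord (if pos then y else x), inord (if pos then x - y.+1 else y - x))).

Definition tuple_of_seq (s : seq nat) : n.-tuple 'I_n.+1 := [tuple inord (nth 0 s i) | i < n].

Lemma sumn_code_parts c : sumn (code_parts c) = weight c.
Proof.
rewrite sumn_cat sumnE big_map -[iota 0 d]/(index_iota 0 d) big_mkord sum_code_rows.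
rewrite (perm_sumn (permEl (perm_sort _ _))) -[mult_seq _ _]map_id sumn_mult_seq.
rewrite big_ord_recl mul0n add0n.
rewrite (eq_bigr (fun v : 'I_d => v.+1 * code_mult c v.+1)) // sum_code_mult /weight.
by rewrite !mulnDr; lia.
Qed.

Section Encode.
Variable l : partn n.
Hypotheses (ncols_d : ncols l = d) (colpos_k : colpos l k = pos).
Local Notation tail := (drop d (parts l)).

Lemma size_tail : size tail = n - d.
Proof. by rewrite size_drop; case: (partsP l) => ->. Qed.

Lemma tail_small : all (gtn d.+1) tail.
Proof. by apply/allP => y /(ncols_tail_leq ncols_d). Qed.

Lemma encode_gap (i : 'I_k) : (encode l).1.1 i = lam l i - lam l i.+1 :> nat.
Proof.
by rewrite ffunE inordK // ltnS (leq_trans (leq_subr _ _)) // (leq_trans (lam_leqn l i)).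
Qed.

Lemma encode_mult (i : 'I_k) : (encode l).1.2 i = count_mem i.+1 tail :> nat.
Proof. by rewrite ffunE inordK // ltnS (leq_trans (count_size _ _)) // size_tail; lia. Qed.

Lemma encode_xy : code_x (encode l) = lam l k - d /\ code_y (encode l) = count_mem d tail.
Proof.
have sign := colpos_lastE ncols_d; rewrite colpos_k in sign.
have le_xn := lam_leqn l k.
have le_yn : count_mem d tail <= n - d by rewrite -size_tail count_size.
rewrite /code_x /code_y /=; set y := count_mem d tail in sign le_yn *.
have := le_nM; move: sign; case: pos => /esym; [move/idP|move/negbT; rewrite -leqNgt] => ? ?;
  by rewrite !inordK; try split; lia.
Qed.

Lemma code_mult_encode v : 0 < v <= d -> code_mult (encode l) v = count_mem v tail.
Proof.
case/andP=> v_gt0 le_vd; rewrite /code_mult; case: eqP => [->|/eqP ne_vd].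
  by case: encode_xy.
have lt_vk : v.-1 < k by lia.
by rewrite (ffun0E _ (Ordinal lt_vk)) encode_mult /= prednK.
Qed.

Lemma code_mult0_encode v : v <= d -> code_mult0 (encode l) v = count_mem v tail.
Proof.
rewrite /code_mult0; case: eqP => [-> _|/eqP ? ?]; last by apply: code_mult_encode; lia.
have := sum_mul_count (fun v => predT v : nat) tail_small.
rewrite sumn_count count_predT size_tail big_ord_recl.
rewrite (eq_bigr (fun u : 'I_d => code_mult (encode l) u.+1)) /=.
  by rewrite mul1n => <-; rewrite addnK.
by move=> u _; rewrite mul1n code_mult_encode //= ltn_ord.
Qed.

Lemma code_row_encode i : i <= k -> code_row (encode l) i = lam l i.
Proof.
move=> le_ik; rewrite /code_row (telescope_nonincr (g := lam l) _ le_ik); last first.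
  by move=> t; apply: leq_lam.
rewrite (eq_big_nat _ _ (F2 := fun t => lam l t - lam l t.+1)); last first.
  by move=> t /andP [_ lt_tk]; rewrite (ffun0E _ (Ordinal lt_tk)) encode_gap.
by case: encode_xy => -> _; have := ncols_lam_geq ncols_d (ltnSn k); lia.
Qed.

Lemma code_parts_encode : code_parts (encode l) = parts l.
Proof.
have [le_dn _] := ncolsP ncols_d.
rewrite /code_parts -[RHS](cat_take_drop d) take_parts //; congr (_ ++ _).
  by apply/eq_in_map => i /[!mem_iota] /andP [_ lt_id]; apply: code_row_encode.
apply: sorted_geq_eq; first by apply: sort_sorted => a b; exact: leq_total.
  by apply: drop_sorted; case: (partsP l).
move=> u; rewrite count_sort count_mult_seq ltnS.
case: leqP => [/code_mult0_encode //|lt_du].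
by apply/esym/count_memPn/negP => /(ncols_tail_leq ncols_d); lia.
Qed.

Lemma weight_encode : weight (encode l) = n.
Proof. by rewrite -sumn_code_parts code_parts_encode; case: (partsP l). Qed.

End Encode.

Section Decode.
Variable c : code.
Hypothesis weight_c : weight c = n.

Lemma sum_code_mult_leq : d + \sum_(v < d) code_mult c v.+1 <= n.
Proof.
have : \sum_(v < d) code_mult c v.+1 <= \sum_(v < d) v.+1 * code_mult c v.+1.
  by apply: leq_sum => v _; rewrite mulSn leq_addr.
rewrite sum_code_mult -weight_c /weight mulnDr; have : d <= d * d by rewrite leq_pmulr.
lia.
Qed.

Lemma size_code_parts : size (code_parts c) = n.
Proof.
rewrite size_cat size_map size_iota size_sort size_mult_seq big_ord_recl.
under eq_bigr do rewrite lift0; rewrite /code_mult0 /=.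
have le_dn : d <= n by have := sum_code_mult_leq; lia.
by rewrite subnK ?subnKC // leq_subRL // sum_code_mult_leq.
Qed.

Lemma code_tail_leq y : y \in sort geq (mult_seq (code_mult0 c) d.+1) -> y <= d.
Proof. by rewrite mem_sort => /mem_mult_seq. Qed.

Lemma sorted_code_parts : sorted geq (code_parts c).
Proof.
apply: sorted_geq_cat.
- by rewrite sorted_map; apply: sub_sorted (iota_sorted 0 d) => i j; apply: code_row_nonincr.
- by apply: sort_sorted => a b; exact: leq_total.
- by move=> _ y /mapP [i _ ->] /code_tail_leq; have := code_row_geq c i; lia.
Qed.

Lemma code_parts_leqn y : y \in code_parts c -> y <= n.
Proof. by rewrite -weight_c -sumn_code_parts; apply: leq_sumn_mem. Qed.

Lemma map_tuple_of_code_parts : map val (tuple_of_seq (code_parts c)) = code_parts c.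
Proof.
apply: (@eq_from_nth _ 0); first by rewrite size_map size_tuple size_code_parts.
move=> i; rewrite size_map size_tuple => lt_in.
rewrite (nth_map ord0) ?size_tuple // -(tnth_nth _ _ (Ordinal lt_in)) tnth_mktuple /=.
by rewrite inordK // ltnS code_parts_leqn // mem_nth ?size_code_parts.
Qed.

Lemma decode_subproof : sorted geq (map val (tuple_of_seq (code_parts c)))
  && (\sum_(i <- tuple_of_seq (code_parts c)) val i == n).
Proof.
have -> : \sum_(i <- tuple_of_seq (code_parts c)) val i
          = sumn (map val (tuple_of_seq (code_parts c))) by rewrite sumnE big_map.
by rewrite map_tuple_of_code_parts sorted_code_parts sumn_code_parts weight_c eqxx.
Qed.

Definition decode : partn n := exist _ (tuple_of_seq (code_parts c)) decode_subproof.

Lemma parts_decode : parts decode = code_parts c.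
Proof. exact: map_tuple_of_code_parts. Qed.

Lemma lam_decode_head i : i < d -> lam decode i = code_row c i.
Proof.
move=> lt_id; rewrite /lam parts_decode nth_cat size_map size_iota lt_id.
by rewrite (nth_map 0) ?size_iota // nth_iota.
Qed.

Lemma lam_decode_tail i : d <= i -> lam decode i <= d.
Proof.
move=> le_di; rewrite /lam parts_decode nth_cat size_map size_iota ltnNge le_di /=.
set s := sort _ _; have [lt_is|le_si] := ltnP (i - d) (size s); last by rewrite nth_default.
by apply: code_tail_leq; apply: mem_nth.
Qed.

Lemma ncols_decode : ncols decode = d.
Proof.
apply: count_iota_prefix => [|i _]; first by have := sum_code_mult_leq; lia.
have [lt_id|le_di] := ltnP i d.
  by rewrite lam_decode_head //; have := code_row_geq c i; lia.
by have := lam_decode_tail le_di; lia.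
Qed.

Lemma count_tail_decode u :
  count_mem u (drop d (parts decode)) = if u < d.+1 then code_mult0 c u else 0.
Proof.
rewrite parts_decode /code_parts drop_size_cat ?size_map ?size_iota //.
by rewrite count_sort count_mult_seq.
Qed.

Lemma colpos_decode : colpos decode k = pos.
Proof.
rewrite (colpos_lastE ncols_decode) count_tail_decode ltnSn lam_decode_head //.
rewrite code_row_last /code_mult0 /code_mult /= eqxx /code_x /code_y.
by case: pos; lia.
Qed.

Lemma encode_decode : encode decode = c.
Proof.
have x_E : lam decode k - d = code_x c by rewrite lam_decode_head // code_row_last addKn.
have y_E : count_mem d (drop d (parts decode)) = code_y c.
  by rewrite count_tail_decode ltnSn /code_mult0 /code_mult /= eqxx.
have -> : c = ((c.1.1, c.1.2), (c.2.1, c.2.2)) by case: (c) => [[? ?] [? ?]].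
rewrite /encode /= x_E y_E; congr ((_, _), (_, _)).
- apply/ffunP => i; rewrite ffunE -[RHS]inord_val; congr inord.
  have lt_id : i < d := leqW (ltn_ord i).
  by rewrite !lam_decode_head ?ltnS // /code_row big_ltn // addnCA addnK ffun0E.
- apply/ffunP => i; rewrite ffunE -[RHS]inord_val; congr inord.
  rewrite count_tail_decode ifT; last by rewrite !ltnS ltnW.
  by rewrite /code_mult0 /code_mult /= eqSS ltn_eqF // ffun0E.
- rewrite -[RHS]inord_val; congr inord; rewrite /code_x /code_y.
  by case: pos.
- rewrite -[RHS]inord_val; congr inord; rewrite /code_x /code_y.
  by case: pos; lia.
Qed.

End Decode.

Lemma card_code : #|[pred l : partn n | (ncols l == d) && (colpos l k == pos)]|
  = #|[pred c : code | weight c == n]|.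
Proof.
set P := [pred l : partn n | _].
have encode_inj : {in P &, injective encode}.
  move=> l1 l2 /andP [/eqP ncols1 /eqP colpos1] /andP [/eqP ncols2 /eqP colpos2] same.
  by apply: parts_inj; rewrite -(code_parts_encode ncols1 colpos1) same code_parts_encode.
rewrite -(card_in_imset encode_inj); apply: eq_card => c; rewrite inE.
apply/imsetP/eqP => [[l /andP [/eqP ncols_d /eqP colpos_k] ->]|weight_c].
  exact: weight_encode.
exists (decode weight_c); last by rewrite encode_decode.
by rewrite inE ncols_decode colpos_decode !eqxx.
Qed.

End Partitions.

Local Open Scope ring_scope.

Lemma sum_weight : \sum_(c : code) 'X^(weight c) = 'X^(d * d + d * pos)
  * (\prod_(i < k) \sum_(j < N) 'X^(i.+1 * j)) ^+ 2
  * ((\sum_(s < N) 'X^(d * 2 * s)) * (\sum_(t < N) 'X^(d * t))) :> {poly int}.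
Proof.
pose rows (a : {ffun 'I_k -> 'I_N}) : {poly int} := \prod_(i < k) 'X^(i.+1 * a i).
pose corner (st : 'I_N * 'I_N) : {poly int} := 'X^(d * 2 * st.1) * 'X^(d * st.2).
have splitX (c : code) :
    'X^(weight c) = 'X^(d * d + d * pos) * (rows c.1.1 * rows c.1.2) * corner c.2.
  rewrite /rows /corner !prodrXr -!exprD; congr 'X^_.
  by rewrite /weight /code_x /code_y; case: pos => /=; ring.
rewrite (eq_bigr _ (fun c _ => splitX c)).
rewrite (sum_pair_mul (fun ab => 'X^(d * d + d * pos) * (rows ab.1 * rows ab.2)) corner).
rewrite -mulr_sumr (sum_pair_mul rows rows).
rewrite (sum_pair_mul (fun s : 'I_N => 'X^(d * 2 * s)) (fun t : 'I_N => 'X^(d * t))).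
by rewrite /rows -(bigA_distr_bigA (fun (i : 'I_k) (j : 'I_N) => 'X^(i.+1 * j))) expr2 mulrA.
Qed.

Lemma take_sum_weight_qpoch :
  take_poly N ((\sum_(c : code) 'X^(weight c)) * qpoch d ^+ 2 * (1 + 'X^d))
  = take_poly N 'X^(d * d + d * pos).
Proof.
have geom e : (\sum_(j < N) 'X^(e * j)) * (1 - 'X^e) = 1 - 'X^(e * N) :> {poly int}.
  by under eq_bigr do rewrite exprM; rewrite exprM -opprB mulrN mulrC -subrX1 opprB.
rewrite sum_weight /qpoch (big_ord_recr k) /=.
set G := \prod_(i < k) \sum_(j < N) _; set Q := \prod_(i < k) (1 - _).
have GQ : G * Q = \prod_(i < k) (1 - 'X^(i.+1 * N)).
  by rewrite -big_split; apply: eq_bigr => i _; exact: geom.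
set S2 := \sum_(s < N) _; set S1 := \sum_(t < N) _.
have -> : 'X^(d * d + d * pos) * G ^+ 2 * (S2 * S1) * (Q * (1 - 'X^d)) ^+ 2 * (1 + 'X^d)
    = 'X^(d * d + d * pos) * (G * Q) * (G * Q) * (S2 * (1 - 'X^(d * 2))) * (S1 * (1 - 'X^d)).
  by rewrite exprM; ring.
rewrite GQ !geom !take_polyM_1subXn ?muln_gt0 //.
by rewrite !take_polyM_prod_1subXn.
Qed.

End Code.

Local Open Scope ring_scope.

Lemma take_gen_trunc_qpoch k M pos (a : nat -> nat) :
  (forall n, (0 < n <= M)%N ->
     a n = #|[pred l : partn n | (ncols l == k.+1) && (colpos l k == pos)]|) ->
  take_poly M.+1 (gen_trunc a M.+1 * qpoch k.+1 ^+ 2 * (1 + 'X^(k.+1)))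
  = take_poly M.+1 'X^(k.+1 * k.+1 + k.+1 * pos).
Proof.
move=> aE; rewrite -mulrA -take_polyMl (take_gen_trunc (@weight_gt0 k M pos)).
  by rewrite take_polyMl mulrA take_sum_weight_qpoch.
by move=> n /andP [n_gt0 lt_nN]; rewrite aE ?n_gt0 //; apply: card_code.
Qed.

Theorem theorem1p4 (d : nat) : (1 <= d)%N ->
  (forall N : nat,
     take_poly N (gen_trunc (fun n => apos n d) N * qpoch d ^+ 2 * (1 + 'X^d))
     = take_poly N 'X^(d * d + d)) /\
  (forall N : nat,
     take_poly N (gen_trunc (fun n => aneg n d) N * qpoch d ^+ 2 * (1 + 'X^d))
     = take_poly N 'X^(d * d)).
Proof.
case: d => [//|k] _; split=> -[|M]; rewrite ?take_poly0l //.
- rewrite (@take_gen_trunc_qpoch k M true) ?muln1 // => n _.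
  apply: eq_card => l; rewrite !inE; case: eqP => //= ncols_d.
  by rewrite (last_block_posE ncols_d) eqb_id.
- rewrite (@take_gen_trunc_qpoch k M false) ?muln0 ?addn0 // => n _.
  apply: eq_card => l; rewrite !inE; case: eqP => //= ncols_d.
  by rewrite (last_block_negE ncols_d) eqbF_neg.
Qed.
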